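(* Let $K$ be a CMI and let $K'$ be a sub-CMI of $K$. For any joint distribution of $X_1,\dots,X_n$, if $K$ is valid then $K'$ is valid.
   Context: Setting: $X_1,\dots,X_n$ jointly distributed discrete random variables with $H(X_i)<\infty$; distribution unspecified. $X_\alpha=(X_i,i\in\alpha)$, $X_\emptyset$ constant. A CMI is $K=(C,\langle Q_1,\dots,Q_k\rangle)$, $k\ge0$, $C\subseteq\{1,\dots,n\}$, $\langle\cdot\rangle$ an unordered multiset of subsets; valid (for a given distribution) if $\sum_iH(X_{Q_i}|X_C)-H(X_{Q_1},\dots,X_{Q_k}|X_C)=0$. Empty members may be deleted. Degenerate = valid for every distribution; all degenerate CMIs are identified and written $(\cdot,\langle\ \rangle)$. $\mathrm{pur}(K)=(C,\langle Q_i\setminus C:Q_i\setminus C\ne\emptyset\rangle)$. For pure $K$: $\mathbb I_K$ = indices lying in at least two members of the collection if $k\ge2$, else $\emptyset$; $P_1,\dots,P_t$ the nonempty sets among $Q_i\setminus\mathbb I_K$; $\mathrm{can}(K)=(\cdot,\langle\ \rangle)$ if $k\le1$, $(C,\langle\mathbb I_K,\mathbb I_K\rangle)$ if $k\ge2,\mathbb I_K\ne\emptyset,t\le1$, $(C,\langle P_1..P_t\rangle)$ if $k\ge2,\mathbb I_K=\emptyset$, $(C,\langle\mathbb I_K,\mathbb I_K,P_1..P_t\rangle)$ if $k\ge2,\mathbb I_K\ne\emptyset,t\ge2$. For general $K$, $\mathbb I_K$ is the repeated-index set of $\mathrm{pur}(K)$ and $\mathrm{can}(\mathrm{pur}(K))$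 is written $(C,\langle\mathbb I_K,\mathbb I_K,P_i,1\le i\le t\rangle)$ (copies of $\mathbb I_K$ omitted if empty; degenerate $K$ has $\mathbb I_K=\emptyset$, $t\in\{0,1\}$). $P=\bigcup_iP_i$, $S=C\cup P$. $R_K^{K'}$: with $\mathrm{can}(\mathrm{pur}(K'))=(C',\langle\mathbb I_{K'},\mathbb I_{K'},P'_j,1\le j\le s\rangle)$, $D=\mathbb I_{K'}\setminus\mathbb I_K$ and $T_1,\dots,T_u$ the nonempty sets among $P'_j\setminus\mathbb I_K$: $R_K^{K'}=(\cdot,\langle\ \rangle)$ if $D=\emptyset,u\le1$; $(C'\setminus\mathbb I_K,\langle T_1..T_u\rangle)$ if $D=\emptyset,u\ge2$; $(C'\setminus\mathbb I_K,\langle D,D\rangle)$ if $D\ne\emptyset,u\le1$; $(C'\setminus\mathbb I_K,\langle D,D,T_1..T_u\rangle)$ if $D\ne\emptyset,u\ge2$. Sub-CMI: with $K''=R_K^{K'}$, $\mathrm{can}(\mathrm{pur}(K''))=(C'',\langle\mathbb I_{K''},\mathbb I_{K''},P''_j,1\le j\le r\rangle)$, $P''=\bigcup_jP''_j$, $K'$ is a sub-CMI of $K$ if: (i) $K'=(\cdot,\langle\ \rangle)$; or (ii) $\mathrm{can}(\mathrm{pur}(K''))=(\cdot,\langle\ \rangle)$ and $C\subseteq C'$; or (iii) $\mathrm{can}(\mathrm{pur}(K''))\ne(\cdot,\langle\ \rangle)$, $\mathbb I_{K''}=\emptyset$, $P''\subseteq P$, $C\subseteq C''\subseteq S\setminus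 P''$, and whenever $m_1\in P''_{j_1}$, $m_2\in P''_{j_2}$ with $j_1\ne j_2$, then $m_1\in P_{i_1}$, $m_2\in P_{i_2}$ with $i_1\ne i_2$. *)

From HB Require Import structures.
From mathcomp Require Import all_boot all_order all_algebra.
From mathcomp Require Import all_classical all_reals all_analysis.
From mathcomp Require Import Rstruct.
Set Implicit Arguments. Unset Strict Implicit. Unset Printing Implicit Defensive.
Import Order.TTheory GRing.Theory Num.Theory.
Local Open Scope ring_scope.
Local Notation fset0 := (@finset.set0 _).

(* A joint outcome of (X_1,...,X_n); each X_i is discrete, its (countable)
   value set being encoded in nat. *)
Definition outcome (n : nat) := {ffun 'I_n -> nat}.

Definition is_dist (n : nat) (p : outcome n -> Rdefinitions.R) : Prop :=
  (forall x, 0 <= p x) /\ (\esum_(x in [set: outcome n]) (p x)%:E = 1%E).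

Definition marg (n : nat) (p : outcome n -> Rdefinitions.R) (A : {set 'I_n})
  (v : outcome n) : Rdefinitions.R :=
  fine (\esum_(x in [set x : outcome n | forall i, i \in A -> x i = v i]) (p x)%:E).

(* joint entropy H(X_A) (possibly +oo), natural logarithm, 0 log 0 = 0;
   the values of X_A are represented by outcomes that are 0 outside A *)
Definition ent (n : nat) (p : outcome n -> Rdefinitions.R) (A : {set 'I_n}) : \bar Rdefinitions.R :=
  \esum_(v in [set v : outcome n | forall i, i \notin A -> v i = 0%N])
     (- (marg p A v * ln (marg p A v)))%:E.

Definition finite_ent (n : nat) (p : outcome n -> Rdefinitions.R) : Prop :=
  forall i : 'I_n, (ent p [set i] < +oo)%E.

Definition H (n : nat) (p : outcome n -> Rdefinitions.R) (A : {set 'I_n}) : Rdefinitions.R :=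
  fine (ent p A).

Definition condH (n : nat) (p : outcome n -> Rdefinitions.R) (Q C : {set 'I_n}) : Rdefinitions.R :=
  H p (Q :|: C) - H p C.

(* K = (C, <Q_1,...,Q_k>); the multiset is represented by a list (all
   notions below are invariant under permutation of the list). *)
Record cmi (n : nat) := Cmi { cond : {set 'I_n}; mems : seq {set 'I_n} }.

Definition bigU (n : nat) (s : seq {set 'I_n}) : {set 'I_n} := \big[@finset.setU _/fset0]_(Q <- s) Q.

Definition valid (n : nat) (p : outcome n -> Rdefinitions.R) (K : cmi n) : Prop :=
  \sum_(Q <- mems K) condH p Q (cond K)
  - condH p (bigU (mems K)) (cond K) = 0.

Definition degenerate (n : nat) (K : cmi n) : Prop :=
  forall p : outcome n -> Rdefinitions.R, is_dist p -> finite_ent p -> valid p K.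

Definition nonempties (n : nat) (s : seq {set 'I_n}) : seq {set 'I_n} :=
  [seq Q <- s | Q != fset0].

Definition pur (n : nat) (K : cmi n) : cmi n :=
  Cmi (cond K) (nonempties [seq Q :\: cond K | Q <- mems K]).

Definition rep_idx (n : nat) (s : seq {set 'I_n}) : {set 'I_n} :=
  if (2 <= size s)%N then finset.finset (fun i : 'I_n => (2 <= count (fun Q : {set 'I_n} => i \in Q) s)%N) else fset0.

(* a canonical form (C, <I, I, P_1, ..., P_t>) (copies of I omitted if I = fset0) *)
Record canform (n : nat) := Canform { cC : {set 'I_n}; cI : {set 'I_n}; cP : seq {set 'I_n} }.

Definition cmi_of_canform (n : nat) (f : canform n) : cmi n :=
  Cmi (cC f) ((if cI f == fset0 then [::] else [:: cI f; cI f]) ++ cP f).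

(* can(K) for pure K; None stands for the degenerate symbol (., < >) *)
Definition can (n : nat) (K : cmi n) : option (canform n) :=
  let s := mems K in
  if (size s <= 1)%N then None else
  let I := rep_idx s in
  let ps := nonempties [seq Q :\: I | Q <- s] in
  if (I != fset0) && (size ps <= 1)%N then Some (Canform (cond K) I [::])
  else Some (Canform (cond K) I ps).

(* I_K and the list P_1..P_t of K (for degenerate K: I_K = fset0 and the at most
   one member of pur(K)) *)
Definition IK (n : nat) (K : cmi n) : {set 'I_n} := rep_idx (mems (pur K)).
Definition PK (n : nat) (K : cmi n) : seq {set 'I_n} :=
  match can (pur K) with Some f => cP f | None => mems (pur K) end.

(* R_K^{K'}; None stands for (., < >).  When can(pur(K')) is itself the
   degenerate symbol, K' is degenerate and case (i) of the sub-CMI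
   definition applies, so the value chosen there is irrelevant. *)
Definition Rcmi (n : nat) (K K' : cmi n) : option (cmi n) :=
  match can (pur K') with
  | None => None
  | Some f =>
    let I := IK K in
    let D := cI f :\: I in
    let T := nonempties [seq P :\: I | P <- cP f] in
    let C'' := cC f :\: I in
    if D == fset0 then
      (if (size T <= 1)%N then None else Some (Cmi C'' T))
    else
      (if (size T <= 1)%N then Some (Cmi C'' [:: D; D]) else Some (Cmi C'' [:: D, D & T]))
  end.

Definition sub_cmi (n : nat) (K K' : cmi n) : Prop :=
  let canK'' := obind (fun K'' => can (pur K'')) (Rcmi K K') in
  let P := bigU (PK K) in
  let S := cond K :|: P in
  degenerate K'
  \/ (canK'' = None /\ cond K \subset cond K')
  \/ (exists f : canform n,
        [/\ canK'' = Some f, cI f = fset0,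
            bigU (cP f) \subset P,
            cond K \subset cC f /\ cC f \subset S :\: bigU (cP f) &
            forall (j1 j2 : nat) (m1 m2 : 'I_n),
              (j1 < size (cP f))%N -> (j2 < size (cP f))%N -> j1 <> j2 ->
              m1 \in nth fset0 (cP f) j1 -> m2 \in nth fset0 (cP f) j2 ->
              exists i1 i2 : nat,
                [/\ (i1 < size (PK K))%N, (i2 < size (PK K))%N, i1 <> i2,
                    m1 \in nth fset0 (PK K) i1 & m2 \in nth fset0 (PK K) i2]]).

(* Entropy A |-> H(X_A) is a polymatroid: monotone, and submodular by
   ln x <= x - 1 together with a Gibbs-type bound.  Validity of K = (C, <Q_i>)
   says that its total correlation sum_i H(Q_i|C) - H(U_i Q_i|C), a sum of
   nonnegative conditional mutual informations, vanishes.  For a polymatroid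
   this forces every repeated index, hence I_K, to be determined by C, and makes
   H(.|C) additive over the disjoint blocks P_1, ..., P_t of K; conditioning on
   any Z between C and S keeps this additivity block by block.  The sub-CMI
   conditions ensure that, once the determined indices I_K are removed,
   each block P_i meets at most one member of K'; so H(.|Z) of the members of K'
   adds up to that of their union, and K' is valid. *)

From mathcomp Require Import all_boot all_order all_algebra.
From mathcomp Require Import all_classical all_reals all_analysis.
From mathcomp Require Import Rstruct ring lra.
From mathcomp Require Import fintype finset.
Set Implicit Arguments. Unset Strict Implicit. Unset Printing Implicit Defensive.
Import Order.TTheory GRing.Theory Num.Theory.
Local Open Scope ring_scope.

Lemma count_gt1_nth (T : Type) (x0 : T) (a : pred T) (s : seq T) :
  (1 < count a s)%N <-> exists j1 j2, [/\ (j1 < size s)%N, (j2 < size s)%N,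
     j1 <> j2, a (nth x0 s j1) & a (nth x0 s j2)].
Proof.
have count_gt0 s' k : (k < size s')%N -> a (nth x0 s' k) -> (0 < count a s')%N.
  by move=> ks ak; rewrite -has_count; apply/(has_nthP x0); exists k.
split.
  elim: s => [|x s IH] //=; case ax: (a x) => /=.
    rewrite add1n ltnS -has_count => /(has_nthP x0)[k ks ak].
    by exists 0%N, k.+1.
  by rewrite add0n => /IH[j1 [j2 [l1 l2 ne a1 a2]]]; exists j1.+1, j2.+1; split => // -[].
case=> j1 [j2 []]; elim: s j1 j2 => [|x s IH] [|k1] [|k2] //= l1 l2 ne a1 a2.
- by rewrite a1 add1n ltnS (count_gt0 _ _ l2 a2).
- by rewrite a2 add1n ltnS (count_gt0 _ _ l1 a1).
- have := IH k1 k2 l1 l2 (fun e => ne (congr1 S e)) a1 a2.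
  by case: (a x) => /= c; rewrite ?add1n ?add0n //; apply: ltn_trans c _.
Qed.

Lemma count_le1_nth_inj (T : Type) (x0 : T) (a : pred T) (s : seq T) i1 i2 :
  (count a s <= 1)%N -> (i1 < size s)%N -> (i2 < size s)%N ->
  a (nth x0 s i1) -> a (nth x0 s i2) -> i1 = i2.
Proof.
move=> c1 l1 l2 a1 a2; apply/eqP/negPn/negP => /eqP ne.
suff : (1 < count a s)%N by rewrite ltnNge c1.
by apply/(count_gt1_nth x0); exists i1, i2.
Qed.

Section SetFamilies.
Variable T : finType.
Implicit Types (A J X : {set T}) (s G : seq {set T}).

Lemma bigcup_set1 A : \bigcup_(i in A) [set i] = A.
Proof.
apply/setP => x; apply/bigcupP/idP => [[i iA]|xA]; first by rewrite inE => /eqP ->.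
by exists x; rewrite ?inE.
Qed.

Lemma bigcup_seq_subset s s' : all2 (fun X Y : {set T} => X \subset Y) s s' ->
  \bigcup_(X <- s) X \subset \bigcup_(Y <- s') Y.
Proof.
elim: s s' => [|X s IH] [|Y s'] //=.
by move=> /andP[sXY /IH ss']; rewrite !big_cons setUSS.
Qed.

Lemma bigcup_seq_sup X s : X \in s -> X \subset \bigcup_(Y <- s) Y.
Proof. by move=> Xs; rewrite bigcup_seq; apply: bigcup_sup. Qed.

Lemma bigcup_filter_nonempty s :
  \bigcup_(X <- [seq X <- s | X != set0]) X = \bigcup_(X <- s) X.
Proof. by rewrite big_filter; apply: big_rmcond => X /negPn /eqP. Qed.

Lemma bigcup_map_setD J s :
  \bigcup_(X <- [seq X :\: J | X <- s]) X = \bigcup_(X <- s) X :\: J.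
Proof.
rewrite big_map; elim: s => [|X s IH]; first by rewrite !big_nil set0D.
by rewrite !big_cons IH setDUl.
Qed.

Lemma bigcup_map_setI A s :
  \bigcup_(X <- [seq A :&: X | X <- s]) X = A :&: \bigcup_(X <- s) X.
Proof.
rewrite big_map; elim: s => [|X s IH]; first by rewrite !big_nil setI0.
by rewrite !big_cons IH setIUr.
Qed.

Lemma sum_nonempty_le1 (V : nmodType) (U : {set T} -> V) s : U set0 = 0 ->
  (count (fun X => X != set0) s <= 1)%N -> \sum_(X <- s) U X = U (\bigcup_(X <- s) X).
Proof.
move=> U0 c1.
rewrite -(@big_rmcond _ _ _ _ s (fun X => X != set0)) => [|X /negPn /eqP ->//].
rewrite -big_filter -bigcup_filter_nonempty; move: c1; rewrite -size_filter.
by case: [seq X <- s | X != set0] => [|X [|]] // _; rewrite ?big_nil ?U0 // !big_seq1.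
Qed.

(* Points of distinct members of [s] lie in distinct members of [G]: the last
   condition in the definition of sub-CMIs. *)
Definition separated_by s G : Prop :=
  forall (j1 j2 : nat) (m1 m2 : T), (j1 < size s)%N -> (j2 < size s)%N -> j1 <> j2 ->
    m1 \in nth set0 s j1 -> m2 \in nth set0 s j2 ->
    exists i1 i2 : nat, [/\ (i1 < size G)%N, (i2 < size G)%N, i1 <> i2,
      m1 \in nth set0 G i1 & m2 \in nth set0 G i2].

Lemma separated_meets_le1 s G X : separated_by s G ->
  (forall m, count (fun Y : {set T} => m \in Y) G <= 1)%N -> X \in G ->
  (count (fun Y : {set T} => X :&: Y != set0) s <= 1)%N.
Proof.
move=> sep G_disj XG; rewrite leqNgt; apply/negP => /(count_gt1_nth set0).
case=> j1 [j2 [l1 l2 ne /set0Pn[m1 /setIP[m1X m1s]] /set0Pn[m2 /setIP[m2X m2s]]]].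
have [i1 [i2 [k1 k2 ne12 m1G m2G]]] := sep _ _ _ _ l1 l2 ne m1s m2s.
have [iX GX] : (index X G < size G)%N /\ nth set0 G (index X G) = X.
  by rewrite index_mem nth_index.
apply: ne12; rewrite (count_le1_nth_inj (G_disj m1) k1 iX m1G) ?GX //.
by rewrite (count_le1_nth_inj (G_disj m2) k2 iX m2G) ?GX.
Qed.

End SetFamilies.

Definition polymatroid (T : finType) (R : numDomainType) (h : {set T} -> R) : Prop :=
  (forall A B : {set T}, A \subset B -> h A <= h B) /\
  (forall A B : {set T}, h (A :|: B) + h (A :&: B) <= h A + h B).

Section Polymatroid.
Variables (T : finType) (R : realDomainType) (h : {set T} -> R).
Hypothesis h_poly : polymatroid h.
Let h_mono : forall A B : {set T}, A \subset B -> h A <= h B := h_poly.1.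
Let h_submod : forall A B : {set T}, h (A :|: B) + h (A :&: B) <= h A + h B := h_poly.2.
Implicit Types (A B C J X Y Z : {set T}) (s G : seq {set T}).

Definition condh A Z := h (A :|: Z) - h Z.
Definition mutinf A B Z := condh A Z + condh B Z - condh (A :|: B) Z.
(* [valid p K] is literally [totcorr (H p) (mems K) (cond K) = 0]. *)
Definition totcorr s Z := \sum_(Q <- s) condh Q Z - condh (\bigcup_(Q <- s) Q) Z.
(* For entropy: X_J is a function of X_Z. *)
Definition determined J Z := h (J :|: Z) = h Z.

Ltac set_tauto := first [apply/setP => ? | apply/subsetP => ?]; rewrite ?inE;
  repeat case: (_ \in _); rewrite ?orbT ?andbF ?orbF //.

Lemma condh0 Z : condh set0 Z = 0.
Proof. by rewrite /condh set0U subrr. Qed.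

Lemma mutinfC A B Z : mutinf A B Z = mutinf B A Z.
Proof. by rewrite /mutinf (setUC A B) [condh A Z + _]addrC. Qed.

Lemma mutinf0 B Z : mutinf set0 B Z = 0.
Proof. by rewrite /mutinf condh0 set0U add0r subrr. Qed.

Lemma le_mutinfl A A' B Z : A \subset A' -> mutinf A B Z <= mutinf A' B Z.
Proof.
move=> /subsetP sAA'; rewrite /mutinf /condh.
have := h_submod (A' :|: Z) (A :|: B :|: Z).
have -> : A' :|: Z :|: (A :|: B :|: Z) = A' :|: B :|: Z.
  apply/setP => x; have := sAA' x; rewrite !inE.
  by case: (x \in A); case: (x \in A'); case: (x \in B); case: (x \in Z) => // ->.
have : h (A :|: Z) <= h ((A' :|: Z) :&: (A :|: B :|: Z)).
  apply: h_mono; apply/subsetP => x; have := sAA' x; rewrite !inE.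
  by case: (x \in A); case: (x \in A'); case: (x \in B); case: (x \in Z) => //= ->.
lra.
Qed.

Lemma le_mutinf A A' B B' Z : A \subset A' -> B \subset B' ->
  mutinf A B Z <= mutinf A' B' Z.
Proof.
move=> sA sB; apply: le_trans (le_mutinfl _ _ sA) _.
by rewrite mutinfC [leRHS]mutinfC le_mutinfl.
Qed.

Lemma mutinf_ge0 A B Z : 0 <= mutinf A B Z.
Proof. by rewrite -(mutinf0 B Z) le_mutinf ?sub0set. Qed.

Lemma totcorr_nil Z : totcorr [::] Z = 0.
Proof. by rewrite /totcorr !big_nil condh0 subrr. Qed.

Lemma totcorr_cons Q s Z :
  totcorr (Q :: s) Z = totcorr s Z + mutinf Q (\bigcup_(X <- s) X) Z.
Proof. rewrite /totcorr /mutinf !big_cons; lra. Qed.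

Lemma totcorr_ge0 s Z : 0 <= totcorr s Z.
Proof.
elim: s => [|Q s IH]; first by rewrite totcorr_nil.
by rewrite totcorr_cons addr_ge0 ?mutinf_ge0.
Qed.

Lemma totcorr_small s Z : (size s <= 1)%N -> totcorr s Z = 0.
Proof.
case: s => [|Q [|//]] _; first exact: totcorr_nil.
by rewrite totcorr_cons totcorr_nil big_nil mutinfC mutinf0 add0r.
Qed.

Lemma le_totcorr s s' Z : all2 (fun X Y : {set T} => X \subset Y) s s' ->
  totcorr s Z <= totcorr s' Z.
Proof.
elim: s s' => [|X s IH] [|Y s'] //= /andP[sXY ss'].
by rewrite !totcorr_cons lerD ?IH ?le_mutinf ?bigcup_seq_subset.
Qed.

Lemma totcorr_map_sub (f : {set T} -> {set T}) s Z : (forall X, f X \subset X) ->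
  totcorr s Z = 0 -> totcorr [seq f X | X <- s] Z = 0.
Proof.
move=> fX s0; apply/eqP; rewrite eq_le totcorr_ge0 -s0 andbT le_totcorr //.
by elim: s {s0} => //= X s ->; rewrite fX.
Qed.

Lemma totcorr_filter_nonempty s Z : totcorr [seq X <- s | X != set0] Z = totcorr s Z.
Proof.
elim: s => [|X s IH] //=; case: eqP => [->|_]; first by rewrite totcorr_cons mutinf0 addr0.
by rewrite !totcorr_cons IH bigcup_filter_nonempty.
Qed.

Lemma determined_absorb J Z X : determined J Z -> h (X :|: J :|: Z) = h (X :|: Z).
Proof.
rewrite /determined => hJ; have := h_submod (X :|: Z) (J :|: Z).
have -> : X :|: Z :|: (J :|: Z) = X :|: J :|: Z by set_tauto.
have : h Z <= h ((X :|: Z) :&: (J :|: Z)) by apply: h_mono; set_tauto.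
have : h (X :|: Z) <= h (X :|: J :|: Z) by apply: h_mono; set_tauto.
rewrite hJ; lra.
Qed.

Lemma determined_sandwich J Z X Y : determined J Z -> X \subset Y ->
  Y \subset X :|: J -> h (X :|: Z) = h (Y :|: Z).
Proof.
move=> hJ sXY sYXJ; apply/eqP; rewrite eq_le h_mono ?setSU //=.
by rewrite -(determined_absorb X hJ) h_mono ?setSU.
Qed.

Lemma determined_widen J Z Z' : determined J Z -> Z \subset Z' -> determined J Z'.
Proof.
move=> hJ /setUidPl sZ; have := determined_absorb Z' hJ; rewrite sZ /determined => <-.
by rewrite -setUA [J :|: Z]setUC setUA sZ setUC.
Qed.

Lemma determined_sub J J' Z : J' \subset J -> determined J Z -> determined J' Z.
Proof.
by move=> sJ hJ; apply/eqP; rewrite eq_le -[X in _ <= X]hJ !h_mono ?setSU ?subsetUr.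
Qed.

Lemma determinedU J J' Z : determined J Z -> determined J' Z -> determined (J :|: J') Z.
Proof. by move=> hJ hJ'; rewrite /determined (setUC J) (determined_absorb _ hJ). Qed.

Lemma determined_bigcup A Z :
  (forall m, m \in A -> determined [set m] Z) -> determined A Z.
Proof.
move=> hA; rewrite -(bigcup_set1 A).
apply: (big_ind (fun J => determined J Z)) => [|X Y|m].
- by rewrite /determined set0U.
- exact: determinedU.
- exact: hA.
Qed.

Lemma condh_setD_determined J Z A : determined J Z -> condh (A :\: J) Z = condh A Z.
Proof.
move=> hJ; rewrite /condh (determined_sandwich (X := A :\: J) (Y := A) hJ) //.
  exact: subsetDl.
by set_tauto.
Qed.

Lemma totcorr_setD_determined J Z s : determined J Z ->
  totcorr [seq X :\: J | X <- s] Z = totcorr s Z.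
Proof.
move=> hJ; elim: s => [|X s IH] //=; rewrite !totcorr_cons IH bigcup_map_setD.
congr (_ + _).
by rewrite /mutinf -setDUl !(condh_setD_determined _ hJ).
Qed.

Lemma totcorr_cond_determined J Z1 Z2 s : Z1 \subset Z2 -> Z2 \subset Z1 :|: J ->
  determined J Z1 -> totcorr s Z2 = totcorr s Z1.
Proof.
move=> s12 /subsetP s21 hJ.
have hZ A : h (A :|: Z2) = h (A :|: Z1).
  have := determined_sandwich (X := A :|: Z1) (Y := A :|: Z2) hJ.
  rewrite -!setUA setUid (setUidPl s12) => -> //; first exact: setUS.
  apply/subsetP => x; have := s21 x; rewrite !inE.
  by case: (x \in Z1); case: (x \in Z2); case: (x \in A); case: (x \in J) => // ->.
have hc A : condh A Z2 = condh A Z1 by rewrite /condh hZ -(set0U Z2) hZ set0U.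
by rewrite /totcorr hc; congr (_ - _); apply: eq_bigr => Q _; exact: hc.
Qed.

Lemma condh_additive G Z A : totcorr G Z = 0 -> A \subset \bigcup_(X <- G) X ->
  condh A Z = \sum_(X <- G) condh (A :&: X) Z.
Proof.
move=> G0 sA; have := totcorr_map_sub (subsetIr A) G0.
by rewrite /totcorr bigcup_map_setI big_map (setIidPl sA) => /eqP; rewrite subr_eq0 => /eqP.
Qed.

Lemma totcorr_nseq k X Z : totcorr (nseq k.+1 X) Z = k%:R * condh X Z.
Proof.
elim: k => [|k IH]; first by rewrite totcorr_small ?mul0r.
rewrite [nseq _ _]/= totcorr_cons IH mulrSr mulrDl mul1r; congr (_ + _).
have -> : \bigcup_(Y <- nseq k.+1 X) Y = X.
  by elim: k {IH} => [|k IH]; rewrite /= big_cons ?big_nil ?setU0 ?IH ?setUid.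
by rewrite /mutinf setUid addrK.
Qed.

Lemma determined_repeated s Z m : totcorr s Z = 0 ->
  (1 < count (fun X => m \in X) s)%N -> determined [set m] Z.
Proof.
move=> s0 c2; pose f X := if m \in X then [set m] else set0.
have fX X : f X \subset X by rewrite /f; case: ifP => mX; rewrite ?sub1set ?sub0set.
have m_neq0 : [set m] != set0 by apply/set0Pn; exists m; rewrite set11.
have := totcorr_map_sub fX s0; rewrite -totcorr_filter_nonempty.
have -> : [seq Y <- [seq f X | X <- s] | Y != set0] =
          nseq (count (fun X => m \in X) s) [set m].
  by elim: s {s0 c2} => //= X s ->; rewrite /f; case: (m \in X); rewrite /= ?m_neq0 ?eqxx.
move: c2; case: count => [|[|k]] // _; rewrite totcorr_nseq => /eqP.
by rewrite mulf_eq0 pnatr_eq0 /= subr_eq0 => /eqP.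
Qed.

Lemma condh_blocks G C Z A : totcorr G C = 0 -> C \subset Z ->
  Z \subset C :|: \bigcup_(X <- G) X -> A \subset \bigcup_(X <- G) X ->
  condh A Z = \sum_(X <- G) (condh ((A :|: Z) :&: X) C - condh (Z :&: X) C).
Proof.
set U := \bigcup_(X <- G) X => G0 sCZ sZ sA.
have ZE : Z :&: U :|: C = Z by rewrite setUIl (setUidPl sCZ) setUC; apply/setIidPl.
have -> : condh A Z = condh (A :|: Z :&: U) C - condh (Z :&: U) C.
  by rewrite /condh -setUA ZE; lra.
rewrite !(condh_additive G0) /U ?subUset ?sA ?subsetIr //.
rewrite -sumrB; apply: eq_big_seq => X /bigcup_seq_sup /subsetP XU.
by congr (condh _ _ - condh _ _); apply/setP => x; have := XU x; rewrite !inE;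
  case: (x \in X) => [->|_]; rewrite ?andbT ?andbF.
Qed.

(* Within one block of [G] at most one member of [s] is visible, so the
   block contributions of the members of [s] add up to that of their union. *)
Lemma totcorr_refine G s C Z : totcorr G C = 0 ->
  (forall m, count (fun X => m \in X) G <= 1)%N ->
  C \subset Z -> Z \subset C :|: \bigcup_(X <- G) X ->
  \bigcup_(Y <- s) Y \subset \bigcup_(X <- G) X -> separated_by s G ->
  totcorr s Z = 0.
Proof.
move=> G0 G_disj sCZ sZ sS sep.
pose psi X A := condh ((A :|: Z) :&: X) C - condh (Z :&: X) C.
have sU Y : Y \in s -> Y \subset \bigcup_(X <- G) X.
  by move=> /bigcup_seq_sup sY; apply: subset_trans sY sS.
rewrite /totcorr (condh_blocks G0) //.
rewrite (eq_big_seq (fun Y => \sum_(X <- G) psi X Y)); last first.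
  by move=> Y /sU sY; rewrite (condh_blocks G0).
rewrite exchange_big /= -sumrB big1_seq // => X XG.
have psiI A : psi X A = psi X (X :&: A).
  by rewrite /psi; congr (condh _ _ - _); apply/setP => x; rewrite !inE;
    case: (x \in X); rewrite ?andbT ?andbF.
rewrite (eq_bigr (fun Y => psi X (X :&: Y))) // -(big_map (setI X) xpredT).
rewrite sum_nonempty_le1 ?bigcup_map_setI -?psiI ?subrr //.
  by rewrite /psi /= set0U subrr.
by rewrite count_map; exact: separated_meets_le1 sep G_disj XG.
Qed.

End Polymatroid.

Section CanonicalForm.
Variables (n : nat) (R : realDomainType) (h : {set 'I_n} -> R).
Hypothesis h_poly : polymatroid h.
Implicit Types (K : cmi n) (f : canform n) (C X : {set 'I_n}) (s : seq {set 'I_n}).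
Local Notation totcorr := (totcorr h).
Local Notation determined := (determined h).

Lemma totcorr_pur K : totcorr (mems (pur K)) (cond K) = totcorr (mems K) (cond K).
Proof.
by rewrite totcorr_filter_nonempty totcorr_setD_determined // /determined setUid.
Qed.

Lemma canE K : can K =
  if (size (mems K) <= 1)%N then None else
  Some (Canform (cond K) (rep_idx (mems K))
    (if (rep_idx (mems K) != set0) &&
        (size (nonempties [seq Q :\: rep_idx (mems K) | Q <- mems K]) <= 1)%N
     then [::] else nonempties [seq Q :\: rep_idx (mems K) | Q <- mems K])).
Proof. by rewrite /can; case: ifP => //; case: ifP. Qed.

Lemma rep_idxP s m : m \in rep_idx s -> (1 < count (fun X => m \in X) s)%N.
Proof. by rewrite /rep_idx; case: ifP => _; rewrite ?inE. Qed.

Lemma totcorr_can_None K : can (pur K) = None -> totcorr (mems K) (cond K) = 0.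
Proof. by rewrite -totcorr_pur canE; case: ifP => // s1 _; apply: totcorr_small. Qed.

Lemma determined_IK K : totcorr (mems K) (cond K) = 0 -> determined (IK K) (cond K).
Proof.
rewrite -totcorr_pur => K0; apply: determined_bigcup => // m /rep_idxP.
exact: determined_repeated.
Qed.

Lemma totcorr_PK K : totcorr (mems K) (cond K) = 0 -> totcorr (PK K) (cond K) = 0.
Proof.
move=> K0; have hI := determined_IK K0; move: K0; rewrite -totcorr_pur /PK canE.
case: ifP => [s1 _|_ K0]; first exact: totcorr_small.
case: ifP => _; first exact: totcorr_nil.
by rewrite totcorr_filter_nonempty totcorr_setD_determined.
Qed.

Lemma count_PK_le1 K m : (count (fun X => m \in X) (PK K) <= 1)%N.
Proof.
rewrite /PK canE; case: ifP => [s1|s2]; first exact: leq_trans (count_size _ _) s1.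
case: ifP => _ //=; rewrite /nonempties count_filter count_map.
apply: (@leq_trans (count (fun X => m \in X :\: IK K) (mems (pur K)))).
  by apply: sub_count => X /andP[].
case mI: (m \in IK K).
  by rewrite (eq_count (a2 := pred0)) ?count_pred0 // => X /=; rewrite inE mI.
apply: (@leq_trans (count (fun X => m \in X) (mems (pur K)))).
  by apply: sub_count => X /=; rewrite inE => /andP[].
by move: mI; rewrite /IK /rep_idx ltnNge s2 inE; case: leqP.
Qed.

Lemma pur_disjoint K X : X \in mems (pur K) -> X \subset ~: cond K.
Proof. by rewrite mem_filter => /andP[_ /mapP[Q _ ->]]; rewrite setDE subsetIr. Qed.

Lemma canP K f : can (pur K) = Some f ->
  [/\ cC f = cond K, cI f = IK K, cI f \subset ~: cond K &
      forall X, X \in cP f -> X \subset ~: cond K].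
Proof.
rewrite canE; case: ifP => // _ [<-] /=; split => //.
  apply/subsetP => m /rep_idxP /ltnW; rewrite -has_count => /hasP[X /pur_disjoint].
  by move/subsetP; apply.
move=> X; case: ifP => // _; rewrite mem_filter => /andP[_ /mapP[Q QK ->]].
exact: subset_trans (subsetDl _ _) (pur_disjoint QK).
Qed.

Lemma totcorr_of_canform K f : can (pur K) = Some f ->
  determined (cI f) (cC f) -> totcorr (cP f) (cC f) = 0 -> totcorr (mems K) (cond K) = 0.
Proof.
rewrite canE; case: ifP => // _ [<-] /= hI D0.
rewrite -totcorr_pur -(totcorr_setD_determined h_poly _ hI) -totcorr_filter_nonempty.
by move: D0; case: ifP => [/andP[_ s1] _|_ //]; apply: totcorr_small.
Qed.

Lemma can_pur_Cmi C s : (1 < size s)%N -> all (fun X => X \subset ~: C) s ->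
  all (fun X => X != set0) s ->
  can (pur (Cmi C s)) = Some (Canform C (rep_idx s)
    (if (rep_idx s != set0) && (size (nonempties [seq Q :\: rep_idx s | Q <- s]) <= 1)%N
     then [::] else nonempties [seq Q :\: rep_idx s | Q <- s])).
Proof.
move=> s2 sC s0; suff -> : pur (Cmi C s) = Cmi C s by rewrite canE /= leqNgt s2.
rewrite /pur /=; congr Cmi.
have -> : [seq X :\: C | X <- s] = s.
  by elim: s {s2 s0} sC => //= X s IH /andP[XC /IH ->]; rewrite setDE (setIidPl XC).
exact/all_filterP.
Qed.

Section Trimmed.
Variables (K K' : cmi n) (f' : canform n).
Hypothesis cf' : can (pur K') = Some f'.
Local Notation I := (IK K).
Local Notation C'' := (cC f' :\: IK K).
Local Notation T := (nonempties [seq P :\: IK K | P <- cP f']).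

Lemma trimmed_disjoint X : X \subset ~: cC f' -> X :\: I \subset ~: C''.
Proof.
move=> XC; apply: subset_trans (subsetDl _ _) (subset_trans XC _).
by rewrite setCS subsetDl.
Qed.

Lemma trimmed_members : all (fun X => X \subset ~: C'') T /\ all (fun X => X != set0) T.
Proof.
have [eC _ _ sP] := canP cf'; split; last exact: filter_all.
apply/allP => X; rewrite mem_filter => /andP[_ /mapP[P PP ->]].
by apply: trimmed_disjoint; rewrite eC sP.
Qed.

Lemma Rcmi_rep : ~~ (cI f' \subset I) ->
  exists2 f, obind (fun K'' => can (pur K'')) (Rcmi K K') = Some f & cI f != set0.
Proof.
move=> nsub; have [eC _ sI _] := canP cf'; have [TC T0] := trimmed_members.
have Dn : cI f' :\: I != set0 by rewrite setD_eq0.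
have DC : cI f' :\: I \subset ~: C'' by apply: trimmed_disjoint; rewrite eC.
have rep s : all (fun X => X \subset ~: C'') s -> all (fun X => X != set0) s ->
    exists2 f, can (pur (Cmi C'' [:: cI f' :\: I, cI f' :\: I & s])) = Some f
             & cI f != set0.
  move=> sC s0; rewrite can_pur_Cmi //= ?Dn ?DC ?sC ?s0 //; eexists; first reflexivity.
  by case/set0Pn: Dn => m mD; apply/set0Pn; exists m; rewrite /rep_idx /= inE mD.
by rewrite /Rcmi cf' (negbTE Dn); case: ifP => _ /=; apply: rep.
Qed.

Lemma Rcmi_rep_free : cI f' \subset I ->
  Rcmi K K' = if (size T <= 1)%N then None else Some (Cmi C'' T).
Proof. by rewrite -setD_eq0 /Rcmi cf' => /eqP ->; rewrite eqxx. Qed.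

End Trimmed.

Lemma totcorr_sub_cmi K K' : totcorr (mems K) (cond K) = 0 -> sub_cmi K K' ->
  degenerate K' \/ totcorr (mems K') (cond K') = 0.
Proof.
move=> K0 [deg|Hsub]; [by left | right].
case cf: (can (pur K')) => [f'|]; last exact: totcorr_can_None.
have [eC _ _ _] := canP cf; have hI := determined_IK K0.
have sI : cI f' \subset IK K.
  apply/negPn/negP => /(Rcmi_rep cf)[f Rf If].
  case: Hsub => [[RN _]|[g [Rg Ig _ _ _]]]; first by rewrite Rf in RN.
  by move: Rg; rewrite Rf => -[fg]; rewrite fg Ig eqxx in If.
move: Hsub; rewrite (Rcmi_rep_free cf sI); have [TC T0] := trimmed_members K cf.
set T := nonempties _ in TC T0 *.
have finish : cond K \subset cC f' -> totcorr T (cC f') = 0 ->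
    totcorr (mems K') (cond K') = 0.
  move=> sKC T0'; have hIC := determined_widen h_poly hI sKC.
  apply: (totcorr_of_canform cf (determined_sub h_poly sI hIC)).
  by rewrite -(totcorr_setD_determined h_poly _ hIC) -totcorr_filter_nonempty.
case: leqP => [T1 [[_ sKK']|[f []]] //|T2].
  by apply: finish (totcorr_small _ _ T1); rewrite eC.
rewrite /= can_pur_Cmi // => -[[//]|[f [[<-] /= I0]]].
have -> : nonempties [seq Q :\: rep_idx T | Q <- T] = T.
  by rewrite I0 (eq_map (@setD0 _)) map_id; apply/all_filterP.
rewrite I0 eqxx /= => sTP [sKC sCS] sep.
have sC : cC f' :\: IK K \subset cC f' := subsetDl _ _.
apply: finish (subset_trans sKC sC) _.
rewrite (totcorr_cond_determined h_poly _ sC _ (determined_widen h_poly hI sKC)).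
  apply: (totcorr_refine h_poly (totcorr_PK K0) (count_PK_le1 K) sKC) => //.
  exact: subset_trans sCS (subsetDl _ _).
by apply/subsetP => x xC; rewrite !inE xC andbT orNb.
Qed.

End CanonicalForm.

Section EsumFacts.
Local Notation R := Rdefinitions.R.
Local Open Scope classical_set_scope.
Local Open Scope ereal_scope.
Variable T : choiceType.

Lemma esumZl (S : set T) (r : R) (a : T -> \bar R) : (0 <= r)%R ->
  (forall x, 0 <= a x) -> \esum_(i in S) (r%:E * a i) = r%:E * \esum_(i in S) a i.
Proof.
move=> r0 a0; rewrite /esum -ereal_supZl //; last first.
  by apply/set0P; exists 0; eexists; [exact: fsets_set0 | exact: fsbig_set0].
congr ereal_sup; apply/seteqP; split => x /=.
  by move=> [F FS <-]; exists (\sum_(i \in F) a i); [exists F | rewrite ge0_mule_fsumr].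
by move=> [y [F FS <-] <-]; exists F => //; rewrite ge0_mule_fsumr.
Qed.

Lemma exchange_esum (T' : choiceType) (f : T -> T' -> \bar R) :
  (forall x y, 0 <= f x y) ->
  \esum_(x in [set: T]) \esum_(y in [set: T']) f x y =
  \esum_(y in [set: T']) \esum_(x in [set: T]) f x y.
Proof.
move=> f0; rewrite !esum_esum //.
rewrite (reindex_esum ([set: T'] `*`` (fun=> [set: T])) _ (fun x => (x.2, x.1))) //.
split => //= [[i1 i2] [j1 j2] /= _ _ [-> ->] //|[i1 i2] _].
by exists (i2, i1).
Qed.

Lemma le_esum_subset (S S' : set T) (a : T -> \bar R) : S `<=` S' ->
  (forall x, 0 <= a x) -> \esum_(i in S) a i <= \esum_(i in S') a i.
Proof.
move=> sS a0; rewrite esum_mkcond [leRHS]esum_mkcond; apply: le_esum => i _.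
case: ifPn => iS; first by rewrite ifT //; apply/mem_set/sS/set_mem.
by case: ifP.
Qed.

Lemma esumD_EFin (S : set T) (f g : T -> R) :
  (forall x, 0 <= f x)%R -> (forall x, 0 <= g x)%R ->
  \esum_(x in S) (f x)%:E + \esum_(x in S) (g x)%:E = \esum_(x in S) (f x + g x)%:E.
Proof.
by move=> f0 g0; rewrite -esumD // => x _; rewrite lee_fin.
Qed.

End EsumFacts.

Section Entropy.
Local Notation R := Rdefinitions.R.
Local Open Scope classical_set_scope.
Variables (n : nat) (p : outcome n -> R).
Hypotheses (p_ge0 : forall x, 0 <= p x)
  (p_sum1 : (\esum_(x in [set: outcome n]) (p x)%:E = 1)%E).
Implicit Types (A B : {set 'I_n}) (x y z v : outcome n).

Definition fiber A v : set (outcome n) := [set x | forall i, i \in A -> x i = v i].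

Lemma fiber_sym A x y : fiber A x y -> fiber A y x.
Proof. by move=> xy i iA; rewrite xy. Qed.

Lemma in_fiberC A x y : (y \in fiber A x) = (x \in fiber A y).
Proof. by apply/idP/idP => /set_mem/fiber_sym/mem_set. Qed.

Lemma esum_p_le1 (S : set (outcome n)) : (\esum_(x in S) (p x)%:E <= 1)%E.
Proof. by rewrite -p_sum1; apply: le_esum_subset => // x; rewrite lee_fin. Qed.

Lemma esum_fiber A v : (\esum_(x in fiber A v) (p x)%:E)%E = (marg p A v)%:E.
Proof.
rewrite /marg fineK // ge0_fin_numE; last by apply: esum_ge0 => x _; rewrite lee_fin.
by apply: (le_lt_trans (esum_p_le1 _)); rewrite ltry.
Qed.

Lemma marg_ge0 A v : 0 <= marg p A v.
Proof. by rewrite -lee_fin -esum_fiber; apply: esum_ge0 => x _; rewrite lee_fin. Qed.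

Lemma marg_le1 A v : marg p A v <= 1.
Proof. by rewrite -lee_fin -esum_fiber; apply: esum_p_le1. Qed.

Lemma p_le_marg A v : p v <= marg p A v.
Proof.
rewrite -lee_fin -esum_fiber -(@esum_set1 _ _ v (fun x => (p x)%:E)) ?lee_fin //.
by apply: le_esum_subset => [x /= -> //|x]; rewrite lee_fin.
Qed.

Lemma marg_gt0 A x : 0 < p x -> 0 < marg p A x.
Proof. by move=> px; apply: lt_le_trans px (p_le_marg _ _). Qed.

Lemma eq_marg A x y : fiber A y x -> marg p A x = marg p A y.
Proof.
move=> xy; rewrite /marg; congr (fine (esum _ _)).
by apply/seteqP; split => z /= zE i iA; rewrite zE // xy.
Qed.

Lemma marg_subset A B x : A \subset B -> marg p B x <= marg p A x.
Proof.
move=> /subsetP sAB; rewrite -!lee_fin -!esum_fiber.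
by apply: le_esum_subset => [z /= zB i /sAB /zB //|z]; rewrite lee_fin.
Qed.

(* On a fiber the marginal is constant, equal to the mass of the fiber. *)
Lemma esum_fiber_div_marg A v :
  (\esum_(x in fiber A v) (p x / marg p A x)%:E <= 1)%E.
Proof.
rewrite (eq_esum (b := fun x => ((marg p A v)^-1%:E * (p x)%:E)%E)); last first.
  by move=> x /eq_marg ->; rewrite -EFinM mulrC.
rewrite esumZl ?invr_ge0 ?marg_ge0 //.
rewrite esum_fiber -EFinM lee_fin.
by have [->|m0] := eqVneq (marg p A v) 0; [rewrite invr0 mul0r | rewrite mulVf].
Qed.

Definition restrict A x : outcome n := [ffun i => if i \in A then x i else 0%N].

(* Outcomes are partitioned by their restrictions to [A], the representatives of
   the values of X_A used in [ent]. *)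
Lemma esum_fiber_partition A (g : outcome n -> \bar R) : (forall x, 0 <= g x)%E ->
  (\esum_(x in [set: outcome n]) g x =
   \esum_(v in [set v : outcome n | forall i, i \notin A -> v i = 0%N])
     \esum_(x in fiber A v) g x)%E.
Proof.
move=> g0; rewrite esum_esum //.
rewrite (reindex_esum [set: outcome n] _ (fun x => (restrict A x, x))) //; split.
- by move=> x _; split => i iA; rewrite ffunE ?(negbTE iA) ?iA.
- by move=> x y _ _ [].
- move=> [v x] [/= v0 xv]; exists x => //; congr (_, _); apply/ffunP => i.
  by rewrite ffunE; case: ifPn => iA; [rewrite xv | rewrite v0].
Qed.

Lemma nln_marg_ge0 A x : 0 <= - ln (marg p A x).
Proof. by rewrite oppr_ge0 ln_le0 // marg_le1. Qed.

Lemma ent_expectation A :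
  ent p A = (\esum_(x in [set: outcome n]) (p x * - ln (marg p A x))%:E)%E.
Proof.
rewrite (esum_fiber_partition A); last by move=> x; rewrite lee_fin mulr_ge0 ?nln_marg_ge0.
apply: eq_esum => v _.
rewrite (eq_esum (b := fun x => ((- ln (marg p A v))%:E * (p x)%:E)%E)); last first.
  by move=> x /eq_marg xv; rewrite -EFinM mulrC xv.
rewrite esumZl ?nln_marg_ge0 //.
by rewrite esum_fiber -EFinM mulNr mulrC.
Qed.

Lemma ent_ge0 A : (0 <= ent p A)%E.
Proof.
by rewrite ent_expectation; apply: esum_ge0 => x _; rewrite lee_fin mulr_ge0 ?nln_marg_ge0.
Qed.

Lemma le_ent A B : A \subset B -> (ent p A <= ent p B)%E.
Proof.
move=> sAB; rewrite !ent_expectation; apply: le_esum => x _; rewrite lee_fin.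
have [->|px] := eqVneq (p x) 0; first by rewrite !mul0r.
have pxp : 0 < p x by rewrite lt0r px p_ge0.
by rewrite ler_wpM2l ?p_ge0 // lerN2 ler_ln ?posrE ?marg_gt0 ?marg_subset.
Qed.

Lemma ent_set0 : ent p set0 = 0%E.
Proof.
rewrite ent_expectation esum1 // => x _.
have -> : marg p set0 x = 1.
  rewrite /marg (_ : [set _ | _] = [set: outcome n]) ?p_sum1 //.
  by apply/seteqP; split => // y _ i; rewrite inE.
by rewrite ln1 oppr0 mulr0.
Qed.

Definition glue A y z : outcome n := [ffun i => if i \in A then y i else z i].

Lemma fiberI A B y z : fiber (A :&: B) y z ->
  fiber A y `&` fiber B z = fiber (A :|: B) (glue A y z).
Proof.
move=> zy; apply/seteqP; split => x; rewrite /fiber /glue /=.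
  move=> [xy xz] i; rewrite inE ffunE => /orP[iA|iB]; first by rewrite iA xy.
  by case: ifPn => iA; [rewrite xy | rewrite xz].
move=> xg; split=> i iX; rewrite xg ?ffunE ?inE ?iX ?orbT //.
by case: ifPn => // iA; rewrite zy // inE iA.
Qed.

Lemma fiber_subset A B v : A \subset B -> fiber B v `<=` fiber A v.
Proof. by move=> /subsetP sAB x xv i /sAB; apply: xv. Qed.

Lemma esum_fiber_pair A B y z :
  (\esum_(x in fiber A y `&` fiber B z)
     (p x / (marg p (A :|: B) x * marg p (A :&: B) x) * p y * p z)%:E <=
   if z \in fiber (A :&: B) y then (p y * (p z / marg p (A :&: B) z))%:E else 0)%E.
Proof.
set u := marg p (A :|: B); set c := marg p (A :&: B).
rewrite (eq_esum (b := fun x => ((p y * p z / c y)%:E * (p x / u x)%:E)%E)); last first.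
  move=> x [/(fiber_subset (subsetIl A B)) /eq_marg cxy _].
  by rewrite -EFinM /c cxy invfM; congr (_%:E); ring.
have [zy|zy] := boolP (z \in fiber (A :&: B) y); last first.
  rewrite esum1 // => x [xy xz]; exfalso; move/negP: zy; apply; apply/mem_set => i.
  by rewrite inE => /andP[iA iB]; rewrite -xz // xy.
rewrite (fiberI (set_mem zy)) esumZl ?divr_ge0 ?mulr_ge0 ?p_ge0 ?marg_ge0 //;
  last by move=> x; rewrite lee_fin divr_ge0 ?p_ge0 ?marg_ge0.
rewrite /c (eq_marg (set_mem zy)) mulrA -[leRHS]mule1.
apply: lee_wpmul2l; first by rewrite lee_fin divr_ge0 ?mulr_ge0 ?p_ge0 ?marg_ge0.
exact: esum_fiber_div_marg.
Qed.

(* The Gibbs-type bound behind submodularity: expanding [marg A x] and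
   [marg B x] as sums over fibers and exchanging the order of summation, the
   inner sums collapse to fibers of [A :|: B] and [A :&: B]. *)
Lemma esum_marg_ratio_le1 A B :
  (\esum_(x in [set: outcome n]) (p x * (marg p A x * marg p B x /
      (marg p (A :|: B) x * marg p (A :&: B) x)))%:E <= 1)%E.
Proof.
set a := marg p A; set b := marg p B; set u := marg p (A :|: B).
set c := marg p (A :&: B).
pose w x := p x / (u x * c x).
have w_ge0 x : 0 <= w x by rewrite divr_ge0 ?mulr_ge0 ?p_ge0 ?marg_ge0.
pose F x y z : \bar R :=
  if (y \in fiber A x) && (z \in fiber B x) then (w x * p y * p z)%:E else 0%E.
have F_ge0 x y z : (0 <= F x y z)%E.
  by rewrite /F /=; case: ifP => _ //; rewrite lee_fin (mulr_ge0 (mulr_ge0 (w_ge0 x) _)).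
pose G y z : \bar R := if z \in fiber (A :&: B) y then (p y * (p z / c z))%:E else 0%E.
have expand x : (p x * (a x * b x / (u x * c x)))%:E =
    (\esum_(y in [set: outcome n]) \esum_(z in [set: outcome n]) F x y z)%E.
  rewrite (eq_esum (b := fun y =>
    if y \in fiber A x then ((w x * b x)%:E * (p y)%:E)%E else 0%E)); last first.
    move=> y _; rewrite /F /=.
    case: (boolP (y \in fiber A x)) => _ /=; last by rewrite esum1.
    rewrite -esum_mkcond (eq_esum (b := fun z => ((w x * p y)%:E * (p z)%:E)%E)).
      by rewrite esumZl ?(mulr_ge0 (w_ge0 x)) // esum_fiber
        -!EFinM mulrAC.
    by move=> z _; rewrite EFinM.
  rewrite -esum_mkcond esumZl ?(mulr_ge0 (w_ge0 x)) ?marg_ge0 //.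
  by rewrite esum_fiber -EFinM /w /a; congr (_%:E); ring.
have collapse y z : (\esum_(x in [set: outcome n]) F x y z <= G y z)%E.
  rewrite (eq_esum (b := fun x => if x \in fiber A y `&` fiber B z
      then (w x * p y * p z)%:E else 0%E)); last first.
    move=> x _; rewrite /F /= (in_fiberC A x y) (in_fiberC B x z).
    by rewrite -classical_sets.in_setI.
  by rewrite -esum_mkcond; apply: esum_fiber_pair.
have sumG y : (\esum_(z in [set: outcome n]) G y z <= (p y)%:E)%E.
  rewrite /G -esum_mkcond (eq_esum (b := fun z => ((p y)%:E * (p z / c z)%:E)%E)).
    rewrite esumZl ?p_ge0 //; last by move=> z; rewrite lee_fin divr_ge0 ?p_ge0 ?marg_ge0.
    rewrite -[leRHS]mule1; apply: lee_wpmul2l; first by rewrite lee_fin p_ge0.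
    exact: esum_fiber_div_marg.
  by move=> z _; rewrite EFinM.
under eq_esum => x _ do rewrite expand.
rewrite exchange_esum; last by move=> x y; apply: esum_ge0.
apply: le_trans (esum_p_le1 [set: outcome n]); apply: le_esum => y _.
rewrite exchange_esum //; apply: le_trans (sumG y); apply: le_esum => z _.
exact: collapse.
Qed.

Lemma ent_submod A B : (ent p (A :|: B) + ent p (A :&: B) <= ent p A + ent p B)%E.
Proof.
set a := marg p A; set b := marg p B; set u := marg p (A :|: B).
set c := marg p (A :&: B).
pose r x := a x * b x / (u x * c x).
have nl_ge0 X x : 0 <= p x * - ln (marg p X x) by rewrite mulr_ge0 ?p_ge0 ?nln_marg_ge0.
have pr_ge0 x : 0 <= p x * r x.
  by rewrite mulr_ge0 ?divr_ge0 ?mulr_ge0 ?p_ge0 ?marg_ge0.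
have pointwise x : p x * - ln (u x) + p x * - ln (c x) + p x <=
    p x * - ln (a x) + p x * - ln (b x) + p x * r x.
  have [->|px] := eqVneq (p x) 0; first by rewrite !mul0r !addr0.
  have px_gt0 : 0 < p x by rewrite lt0r px p_ge0.
  have [ap bp up cp] : [/\ 0 < a x, 0 < b x, 0 < u x & 0 < c x] by split; exact: marg_gt0.
  have ln_r : ln (r x) = ln (a x) + ln (b x) - ln (u x) - ln (c x).
    by rewrite /r ln_div ?posrE ?mulr_gt0 // !lnM ?posrE //; ring.
  have : ln (r x) <= r x - 1.
    have := @le_ln1Dx _ (r x - 1); rewrite addrCA subrr addr0; apply.
    by rewrite ltrBrDr addNr divr_gt0 ?mulr_gt0.
  move/(ler_wpM2l (p_ge0 x)); rewrite ln_r; nra.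
have gibbs : (ent p (A :|: B) + ent p (A :&: B) + 1 <=
        ent p A + ent p B + \esum_(x in [set: outcome n]) (p x * r x)%:E)%E.
  rewrite !ent_expectation -p_sum1 !esumD_EFin //; try by move=> x; rewrite addr_ge0.
  by apply: le_esum => x _; rewrite lee_fin pointwise.
have := le_trans gibbs (leeD2l _ (esum_marg_ratio_le1 A B)).
by rewrite leeD2rE.
Qed.

Lemma ent_lty : finite_ent p -> forall A, (ent p A < +oo)%E.
Proof.
move=> fin_ent A; rewrite -(bigcup_set1 A).
apply: (big_ind (fun X => ent p X < +oo)%E) => [|X Y Xfin Yfin|i _].
- by rewrite ent_set0 ltry.
- apply: le_lt_trans (lte_add_pinfty Xfin Yfin).
  by apply: le_trans (ent_submod X Y); rewrite leeDl ?ent_ge0.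
- exact: fin_ent.
Qed.

Lemma ent_EFin_H : finite_ent p -> forall A, ent p A = (H p A)%:E.
Proof. by move=> fin_ent A; rewrite /H fineK // ge0_fin_numE ?ent_ge0 ?ent_lty. Qed.

Lemma H_polymatroid : finite_ent p -> polymatroid (H p).
Proof.
move=> fin_ent; split=> A B; rewrite -lee_fin ?EFinD -!(ent_EFin_H fin_ent).
  exact: le_ent.
exact: ent_submod.
Qed.

End Entropy.

Theorem mainTheorem13 (n : nat) (K K' : cmi n) (p : outcome n -> Rdefinitions.R) :
  is_dist p -> finite_ent p -> sub_cmi K K' -> valid p K -> valid p K'.
Proof.
move=> [p_ge0 p_sum1] fin_ent sub vK.
have hP := H_polymatroid p_ge0 p_sum1 fin_ent.
by case: (totcorr_sub_cmi hP vK sub) => [deg|//]; apply: deg.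
Qed.
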